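(* Let $(\Sigma,T)$ be a finite convergent length-reducing rewriting system such that $\Sigma=\Sigma^{-1}$ and $(\Sigma,T)$ presents a group $G$. Let $\Gamma$ denote the undirected Cayley graph of $G$ with respect to $\Sigma$. Then (1) $\Gamma$ is geodetic; and (2) if $u_0,u_1,\dots,u_{m-1},u_m=u_0$ is an isometrically embedded circuit in $\Gamma$ of length $m>2$, then $m=2n+1$ for some positive integer $n$ and $(x_1\cdots x_{n+1},\,x_m^{-1}\cdots x_{n+2}^{-1})\in T$, where for $1\le i\le m$, $x_i\in\Sigma$ is a letter with $x_i=_G u_{i-1}^{-1}u_i$.
   Context: A rewriting system $(\Sigma,T)$ has alphabet $\Sigma$ and rules $T\subseteq\Sigma^*\times\Sigma^*$, inducing rewrites $u\ell v\to urv$ for $(\ell,r)\in T$; the group presented is $\Sigma^*$ modulo the equivalence generated by $\to$. Finite: $\Sigma,T$ finite; length-reducing: $|\ell|>|r|$ for all rules; convergent: terminating (no infinite rewrite sequences) and confluent (any two words reachable by rewriting from a common word can be rewritten to a common word). $\Sigma=\Sigma^{-1}$ means for each letter $x$ there is a letter $x^{-1}\in\Sigma$ representing its inverse in $G$. The undirected Cayley graph $\Gamma(G,\Sigma)$ has vertex set $G$, distinct $g,h$ adjacent iff $g^{-1}h$ is represented by an element of $\Sigma\cup\Sigma^{-1}$. A graph is geodetic if between any two vertices there is a unique shortest path; $d$ is the path metric. A path $u_0,\dots,u_m$ is an embedded circuit of length $m$ if $u_0,\dots,u_{m-1}$ are distinct and $u_0=u_m$; it is isometrically embedded if $d(u_i,u_j)=\min\{j-i,m+i-j\}$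 for all $0\le i<j<m$. *)

From mathcomp Require Import all_boot.
From Stdlib Require Import Relations.

Set Implicit Arguments.
Unset Strict Implicit.
Unset Printing Implicit Defensive.

Definition rules (S : finType) := seq (seq S * seq S).

Definition rw (S : finType) (T : rules S) (w w' : seq S) : Prop :=
  exists (u v l r : seq S), (l, r) \in T /\ w = u ++ l ++ v /\ w' = u ++ r ++ v.

Definition rws (S : finType) (T : rules S) := clos_refl_trans (seq S) (@rw S T).

(* the equivalence generated by ->  (equality in the presented monoid/group) *)
Definition eqv (S : finType) (T : rules S) := clos_refl_sym_trans (seq S) (@rw S T).

Definition length_reducing (S : finType) (T : rules S) : Prop :=
  forall l r, (l, r) \in T -> size r < size l.

Definition terminating (S : finType) (T : rules S) : Prop :=
  ~ exists f : nat -> seq S, forall i, rw T (f i) (f i.+1).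

Definition confluent (S : finType) (T : rules S) : Prop :=
  forall w u v, rws T w u -> rws T w v -> exists z, rws T u z /\ rws T v z.

Definition convergent (S : finType) (T : rules S) : Prop :=
  terminating T /\ confluent T.

Definition presents_group (S : finType) (T : rules S) : Prop :=
  forall u : seq S, exists v, eqv T (u ++ v) [::] /\ eqv T (v ++ u) [::].

Definition inverse_closed (S : finType) (T : rules S) : Prop :=
  forall x : S, exists y : S, eqv T [:: x; y] [::] /\ eqv T [:: y; x] [::].

Definition is_inv_letter (S : finType) (T : rules S) (x y : S) : Prop :=
  eqv T [:: x; y] [::] /\ eqv T [:: y; x] [::].

(* Cayley graph Gamma(G, Sigma): vertices are group elements, represented by
   words (equality of vertices = eqv).  Distinct g, h are adjacent iff
   g^{-1} h is represented by a letter of Sigma or the inverse of one. *)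
Definition adj (S : finType) (T : rules S) (g h : seq S) : Prop :=
  ~ eqv T g h /\
  exists x : S, eqv T (g ++ [:: x]) h \/ eqv T (h ++ [:: x]) g.

(* s = [:: v_0; ...; v_k] is a path (of length k = size s - 1) from g to h *)
Definition is_path (S : finType) (T : rules S) (g h : seq S) (s : seq (seq S)) : Prop :=
  0 < size s /\
  eqv T (nth [::] s 0) g /\ eqv T (last [::] s) h /\
  forall i, i.+1 < size s -> adj T (nth [::] s i) (nth [::] s i.+1).

Definition shortest_path (S : finType) (T : rules S) (g h : seq S) (s : seq (seq S)) : Prop :=
  is_path T g h s /\ forall s', is_path T g h s' -> size s <= size s'.

Definition dist (S : finType) (T : rules S) (g h : seq S) (k : nat) : Prop :=
  exists s, shortest_path T g h s /\ size s = k.+1.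

Definition geodetic (S : finType) (T : rules S) : Prop :=
  forall g h : seq S,
    (exists s, shortest_path T g h s) /\
    (forall s s', shortest_path T g h s -> shortest_path T g h s' ->
       size s = size s' /\ forall i, i < size s -> eqv T (nth [::] s i) (nth [::] s' i)).

(* u_0, ..., u_m (u : nat -> word, only indices <= m matter) is an embedded
   circuit of length m *)
Definition embedded_circuit (S : finType) (T : rules S) (u : nat -> seq S) (m : nat) : Prop :=
  (forall i, i < m -> adj T (u i) (u i.+1)) /\
  (forall i j, i < j < m -> ~ eqv T (u i) (u j)) /\
  eqv T (u m) (u 0).

Definition isometric_circuit (S : finType) (T : rules S) (u : nat -> seq S) (m : nat) : Prop :=
  embedded_circuit T u m /\
  forall i j, i < j < m -> dist T (u i) (u j) (minn (j - i) (m + i - j)).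

(* The rules are length-reducing, so a word labelling a geodesic of the
   Cayley graph is irreducible; by confluence it is then the unique irreducible
   word of its group element, which makes geodesics unique.  In an even
   isometric circuit the two halves would be distinct geodesics between
   antipodal vertices.  In an odd one, of length 2n+1, the long side
   x_1 ... x_{n+1} from u_0 to u_{n+1} is not geodesic, hence reducible, while
   its maximal proper factors are geodesic, hence irreducible; so a rule
   rewrites the whole word, and the right-hand side, being geodesic, is the
   irreducible short side x_m^-1 ... x_{n+2}^-1. *)

From mathcomp Require Import all_boot zify.
From Stdlib Require Import Relations Classical.

Set Implicit Arguments.
Unset Strict Implicit.
Unset Printing Implicit Defensive.

Section RewritingSystem.

Variables (S : finType) (T : rules S).

Lemma eqv_refl w : eqv T w w.
Proof. exact: rst_refl. Qed.

Lemma eqv_sym v w : eqv T v w -> eqv T w v.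
Proof. exact: rst_sym. Qed.

Lemma eqv_trans u v w : eqv T u v -> eqv T v w -> eqv T u w.
Proof. exact: rst_trans. Qed.

Lemma rw_eqv v w : rw T v w -> eqv T v w.
Proof. exact: rst_step. Qed.

Lemma rw_ctx a b c d : rw T a b -> rw T (c ++ a ++ d) (c ++ b ++ d).
Proof.
case=> [u [v [l [r [lr [-> ->]]]]]].
by exists (c ++ u), (v ++ d), l, r; rewrite !catA.
Qed.

Lemma eqv_ctx a b c d : eqv T a b -> eqv T (c ++ a ++ d) (c ++ b ++ d).
Proof.
elim=> [x y /(rw_ctx c d)/rw_eqv // | x | x y _ /eqv_sym // | x y z _ + _].
  exact: eqv_refl.
exact: eqv_trans.
Qed.

Lemma eqv_catl a b d : eqv T a b -> eqv T (a ++ d) (b ++ d).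
Proof. exact: eqv_ctx [::] d. Qed.

Lemma eqv_catr a b c : eqv T a b -> eqv T (c ++ a) (c ++ b).
Proof. by move/(eqv_ctx c [::]); rewrite !cats0. Qed.

Lemma rw_size v w : length_reducing T -> rw T v w -> size w < size v.
Proof.
move=> LR [a [b [l [r [/LR lr [-> ->]]]]]].
by rewrite !size_cat ltn_add2l ltn_add2r.
Qed.

Definition irreducible w := forall w', ~ rw T w w'.

Lemma rws_irreducible v w : irreducible v -> rws T v w -> w = v.
Proof. by move=> irr_v /clos_rt_rt1n_iff [// | y z /irr_v]. Qed.

Lemma eqv_joinable v w : confluent T -> eqv T v w -> exists z, rws T v z /\ rws T w z.
Proof.
move=> Cf; elim=> [x y xy | x | x y _ [z [? ?]] | x y z _ [z1 [xz1 yz1]] _ [z2 [yz2 zz2]]].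
- by exists y; split; [apply: rt_step | apply: rt_refl].
- by exists x; split; apply: rt_refl.
- by exists z.
- have [z3 [z1z3 z2z3]] := Cf _ _ _ yz1 yz2.
  by exists z3; split; [apply: rt_trans xz1 z1z3 | apply: rt_trans zz2 z2z3].
Qed.

Lemma eqv_irreducible_eq v w : confluent T ->
  irreducible v -> irreducible w -> eqv T v w -> v = w.
Proof.
move=> Cf irr_v irr_w /(eqv_joinable Cf) [z [vz wz]].
by rewrite -(rws_irreducible irr_v vz) -(rws_irreducible irr_w wz).
Qed.

Lemma rw_rule_of_irreducible_factors w w' :
  (forall x v, w = x :: v -> irreducible v) ->
  (forall v y, w = rcons v y -> irreducible v) ->
  rw T w w' -> (w, w') \in T.
Proof.
move=> irr_suffix irr_prefix [a [b [l [r [lr [wE w'E]]]]]].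
case: a wE w'E => [|x a] wE w'E; last first.
  by case: (irr_suffix x (a ++ l ++ b) wE (a ++ r ++ b)); exists a, b, l, r.
case/lastP: b wE w'E => [|b y] wE w'E; last first.
  rewrite /= -rcons_cat in wE.
  by case: (irr_prefix _ y wE (r ++ b)); exists [::], b, l, r.
by rewrite wE w'E /= !cats0.
Qed.

Lemma eqv_cancel_l g v w : presents_group T -> eqv T (g ++ v) (g ++ w) -> eqv T v w.
Proof.
move=> PG gvw; have [g' [_ g'g]] := PG g.
have cancel_g z : eqv T z (g' ++ g ++ z).
  by rewrite catA; apply: eqv_sym; apply: eqv_catl g'g.
apply: eqv_trans (cancel_g v) _; apply: eqv_trans (eqv_sym (cancel_g w)).
exact: eqv_catr.
Qed.

Lemma adj_sym g h : adj T g h -> adj T h g.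
Proof. by case=> gh [x xgh]; split=> [/eqv_sym // | ]; exists x; tauto. Qed.

Lemma inv_letter_step g h x y :
  is_inv_letter T x y -> eqv T (g ++ [:: x]) h -> eqv T (h ++ [:: y]) g.
Proof.
move=> [xy _] gxh; apply: eqv_trans (eqv_catl _ (eqv_sym gxh)) _.
by rewrite -catA; move/(eqv_catr g): xy; rewrite cats0.
Qed.

Lemma adj_letter g h : inverse_closed T -> adj T g h -> exists y, eqv T (g ++ [:: y]) h.
Proof.
move=> IC [_ [x [gxh | hxg]]]; first by exists x.
by have [y xy] := IC x; exists y; apply: inv_letter_step hxg.
Qed.

Definition adj_chain (s : seq (seq S)) :=
  forall i, i.+1 < size s -> adj T (nth [::] s i) (nth [::] s i.+1).

Lemma adj_chain_label s : inverse_closed T -> adj_chain s ->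
  exists w, size w = (size s).-1 /\
    forall i, i < size s -> eqv T (nth [::] s 0 ++ take i w) (nth [::] s i).
Proof.
move=> IC; elim: s => [_ | a [|b s] IH chain_s]; first by exists [::].
  by exists [::]; split=> // -[] // _; rewrite cats0; apply: eqv_refl.
have [w [sizew label_w]] := IH (fun i => chain_s i.+1).
have [y ayb] := adj_letter IC (chain_s 0 isT).
exists (y :: w); split=> [/= | [_ | i /label_w bw]]; first by rewrite sizew.
  by rewrite cats0; apply: eqv_refl.
by apply: eqv_trans bw; rewrite /= -cat1s catA; apply: eqv_catl.
Qed.

Lemma label_path g w : exists s, is_path T g (g ++ w) s /\ size s <= (size w).+1.
Proof.
elim: w g => [|x w IH] g.
  exists [:: g]; rewrite cats0.
  by do !split=> //; apply: eqv_refl.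
have [s [[s_gt0 [head_s [last_s chain_s]]] size_s]] := IH (g ++ [:: x]).
rewrite -catA in last_s.
case: (classic (eqv T g (g ++ [:: x]))) => [g_gx | g_ngx].
  exists s; split; last by rewrite /=; lia.
  by do !split=> //; apply: eqv_trans head_s (eqv_sym g_gx).
case: s s_gt0 head_s last_s chain_s size_s => // b s _ head_s last_s chain_s size_s.
exists [:: g, b & s]; split; last by rewrite /= in size_s *; lia.
split=> //; split; first exact: eqv_refl.
split=> // -[_ | i]; last exact: chain_s.
split=> [g_b | ]; first by apply: g_ngx; apply: eqv_trans g_b head_s.
by exists x; left; apply: eqv_sym.
Qed.

Lemma is_path_eqv g g' h h' s :
  eqv T g g' -> eqv T h h' -> is_path T g h s -> is_path T g' h' s.
Proof.
move=> gg' hh' [s_gt0 [head_s [last_s chain_s]]].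
by split=> //; split; [apply: eqv_trans gg' | split=> //; apply: eqv_trans hh'].
Qed.

Lemma dist_le_label g h k w : dist T g h k -> eqv T (g ++ w) h -> k <= size w.
Proof.
move=> [s [[_ min_s] size_s]] gwh; have [s' [path_s' size_s']] := label_path g w.
have [s'_gt0 [head_s' [last_s' chain_s']]] := path_s'.
have: size s <= size s' by apply: min_s; do !split=> //; apply: eqv_trans last_s' gwh.
by rewrite size_s; lia.
Qed.

Lemma geodesic_label_irreducible g h k w : length_reducing T ->
  dist T g h k -> eqv T (g ++ w) h -> size w <= k -> irreducible w.
Proof.
move=> LR dk gwh size_w w' ww'.
have gw'h : eqv T (g ++ w') h.
  by apply: eqv_trans gwh; apply: eqv_catr; apply/eqv_sym/rw_eqv.
by have := rw_size LR ww'; have := dist_le_label dk gw'h; lia.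
Qed.

Lemma shortest_path_of_dist g h k s :
  dist T g h k -> is_path T g h s -> size s = k.+1 -> shortest_path T g h s.
Proof.
move=> [s' [[_ min_s'] size_s']] path_s size_s.
by split=> // t /min_s'; rewrite size_s' size_s.
Qed.

Lemma exists_shortest_path g h s : is_path T g h s -> exists s', shortest_path T g h s'.
Proof.
elim: {s}(size s) {-2}s (leqnn (size s)) => [|n IH] s size_s path_s.
  by case: path_s; lia.
case: (classic (exists s', is_path T g h s' /\ size s' < size s)).
  by move=> [s' [path_s' lt_s's]]; apply: IH path_s'; lia.
move=> no_shorter.
exists s; split=> // s' path_s'; rewrite leqNgt; apply/negP=> lt_s's.
by apply: no_shorter; exists s'.
Qed.

Lemma shortest_path_label g h s : length_reducing T -> inverse_closed T ->
  shortest_path T g h s ->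
  exists w, [/\ irreducible w, eqv T (g ++ w) h &
    forall i, i < size s -> eqv T (g ++ take i w) (nth [::] s i)].
Proof.
move=> LR IC [path_s min_s]; have [s_gt0 [head_s [last_s chain_s]]] := path_s.
have [w [size_w label_w]] := adj_chain_label IC chain_s.
have label_w' i : i < size s -> eqv T (g ++ take i w) (nth [::] s i).
  by move=> /label_w; apply: eqv_trans; apply: eqv_catl; apply: eqv_sym.
have gwh : eqv T (g ++ w) h.
  have := label_w' (size s).-1; rewrite take_oversize ?size_w // nth_last.
  by move=> /(_ ltac:(lia)) /eqv_trans; apply.
exists w; split=> //.
apply: (geodesic_label_irreducible (k := (size s).-1)) LR _ gwh _; last by rewrite size_w.
by exists s; split; [split | lia].
Qed.

Theorem cayley_geodetic : length_reducing T -> confluent T ->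
  inverse_closed T -> presents_group T -> geodetic T.
Proof.
move=> LR Cf IC PG g h; split.
  have [v [gv _]] := PG g.
  have [s [[s_gt0 [head_s [last_s chain_s]]] _]] := label_path g (v ++ h).
  apply: (@exists_shortest_path _ _ s); do !split=> //.
  by apply: eqv_trans last_s _; rewrite catA; apply: eqv_catl gv.
move=> s s' short_s short_s'.
have size_ss' : size s = size s'.
  case: short_s short_s' => [path_s min_s] [path_s' min_s'].
  by apply/eqP; rewrite eqn_leq min_s ?min_s'.
have [w [irr_w gwh label_w]] := shortest_path_label LR IC short_s.
have [w' [irr_w' gw'h label_w']] := shortest_path_label LR IC short_s'.
have ww' : w = w'.
  apply: eqv_irreducible_eq Cf irr_w irr_w' (eqv_cancel_l PG _).
  exact: eqv_trans gwh (eqv_sym gw'h).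
split=> // i lt_is; apply: eqv_trans (eqv_sym (label_w i lt_is)) _.
by rewrite ww'; apply: label_w'; rewrite -size_ss'.
Qed.

End RewritingSystem.

Section Circuits.

Variables (S : finType) (T : rules S) (u : nat -> seq S).

Lemma is_path_mkseq (f : nat -> seq S) n :
  (forall i, i < n -> adj T (f i) (f i.+1)) -> is_path T (f 0) (f n) (mkseq f n.+1).
Proof.
move=> chain_f; rewrite /is_path size_mkseq -nth_last size_mkseq !nth_mkseq //.
split=> //; split; first exact: eqv_refl.
split; first exact: eqv_refl.
by move=> i lt_in; rewrite !nth_mkseq; [apply: chain_f | ..]; lia.
Qed.

Lemma isometric_circuit_odd m : geodetic T -> 2 < m -> isometric_circuit T u m -> odd m.
Proof.
move=> geo m_gt2 [[chain_u [distinct_u closed_u]] iso_u]; apply/negPn/negP => even_m.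
have [n mE] : exists n, m = n + n.
  by exists m./2; rewrite addnn -[LHS]odd_double_half (negbTE even_m).
subst m.
have dist_n : dist T (u 0) (u n) n.
  by have := iso_u 0 n; rewrite (_ : minn _ _ = n); [apply; lia | lia].
have path1 : is_path T (u 0) (u n) (mkseq u n.+1).
  by apply: is_path_mkseq => i ?; apply: chain_u; lia.
have path2 : is_path T (u 0) (u n) (mkseq (fun i => u (n + n - i)) n.+1).
  apply: is_path_eqv (is_path_mkseq _); rewrite ?subn0 ?addnK //; first exact: eqv_refl.
  move=> i lt_in; rewrite (_ : n + n - i = (n + n - i.+1).+1); last lia.
  by apply: adj_sym; apply: chain_u; lia.
have [_ geodesic_unique] := geo (u 0) (u n).
have [_ /(_ 1)] := geodesic_unique _ _
  (shortest_path_of_dist dist_n path1 (size_mkseq _ _))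
  (shortest_path_of_dist dist_n path2 (size_mkseq _ _)).
rewrite size_mkseq !nth_mkseq; try lia.
by move=> /(_ ltac:(lia)); apply: distinct_u; lia.
Qed.

Section Labels.

Variables (m : nat) (x xinv : nat -> S).
Hypothesis label_x : forall i, 1 <= i <= m -> eqv T (u i.-1 ++ [:: x i]) (u i).
Hypothesis inv_x : forall i, 1 <= i <= m -> is_inv_letter T (x i) (xinv i).

Lemma walk_label i d : i + d <= m -> eqv T (u i ++ map x (iota i.+1 d)) (u (i + d)).
Proof.
elim: d => [|d IH] le_m; first by rewrite addn0 cats0; apply: eqv_refl.
rewrite -[d.+1]addn1 iotaD map_cat catA addn1 addnS -addSn.
apply: eqv_trans (eqv_catl _ (IH _)) _; first lia.
by apply: label_x; lia.
Qed.

Lemma walk_label_rev i d :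
  i + d <= m -> eqv T (u (i + d) ++ map xinv (rev (iota i.+1 d))) (u i).
Proof.
elim: d i => [|d IH] i le_m; first by rewrite addn0 cats0; apply: eqv_refl.
rewrite /= rev_cons map_rcons -cats1 catA addnS -addSn.
apply: eqv_trans (eqv_catl _ (IH _ _)) _; first lia.
by apply: (inv_letter_step (inv_x _) (label_x _)); lia.
Qed.

Lemma isometric_circuit_rule n : length_reducing T -> confluent T -> presents_group T ->
  m = n.*2.+1 -> 0 < n -> isometric_circuit T u m ->
  (map x (iota 1 n.+1), map xinv (rev (iota n.+2 n))) \in T.
Proof.
move=> LR Cf PG mE n_gt0 [[_ [_ closed_u]] iso_u]; rewrite -addnn in mE.
have dist_u i j : i < j < m -> minn (j - i) (m + i - j) = n -> dist T (u i) (u j) n.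
  by move=> ij <-; apply: iso_u.
have dist_0n1 : dist T (u 0) (u n.+1) n by apply: dist_u; lia.
set W := map x (iota 1 n.+1); set V := map xinv (rev (iota n.+2 n)).
have uW : eqv T (u 0 ++ W) (u n.+1) by apply: walk_label; lia.
have uV : eqv T (u 0 ++ V) (u n.+1).
  apply: eqv_trans (eqv_catl _ (eqv_sym closed_u)) _.
  by rewrite (_ : m = n.+1 + n); [apply: walk_label_rev | ]; lia.
have irr_V : irreducible T V.
  by apply: geodesic_label_irreducible LR dist_0n1 uV _; rewrite size_map size_rev size_iota.
have eqv_V w : eqv T (u 0 ++ w) (u n.+1) -> eqv T w V.
  by move=> uw; apply: eqv_cancel_l PG (eqv_trans uw (eqv_sym uV)).
have [W' WW'] : exists W', rw T W W'.
  apply: NNPP => irr_W; have := eqv_V _ uW.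
  move/(eqv_irreducible_eq Cf (fun w' ww' => irr_W (ex_intro _ w' ww')) irr_V)/(congr1 size).
  by rewrite !size_map size_rev !size_iota; lia.
have uW' : eqv T (u 0 ++ W') (u n.+1).
  by apply: eqv_trans uW; apply: eqv_catr; apply/eqv_sym/rw_eqv.
have size_W' : size W' <= n by have := rw_size LR WW'; rewrite size_map size_iota.
have <- : W' = V.
  apply: eqv_irreducible_eq Cf _ irr_V (eqv_V _ uW').
  exact: geodesic_label_irreducible LR dist_0n1 uW' size_W'.
apply: rw_rule_of_irreducible_factors WW' => [y v [_ <-] | v y].
  have dist_1n1 : dist T (u 1) (u n.+1) n by apply: dist_u; lia.
  apply: geodesic_label_irreducible LR dist_1n1 _ _; last by rewrite size_map size_iota.
  by apply: walk_label; lia.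
rewrite /W -[n.+1]addn1 iotaD map_cat cats1 => /rcons_inj [<- _].
have dist_0n : dist T (u 0) (u n) n by apply: dist_u; lia.
apply: geodesic_label_irreducible LR dist_0n _ _; last by rewrite size_map size_iota.
by apply: walk_label; lia.
Qed.

End Labels.

End Circuits.

Theorem lemma9 (S : finType) (T : rules S) :
  length_reducing T -> convergent T -> inverse_closed T -> presents_group T ->
  geodetic T /\
  (forall (u : nat -> seq S) (m : nat),
     2 < m -> isometric_circuit T u m ->
     exists n : nat, 0 < n /\ m = n.*2.+1 /\
       forall (x xinv : nat -> S),
         (forall i, 1 <= i <= m -> eqv T (u i.-1 ++ [:: x i]) (u i)) ->
         (forall i, 1 <= i <= m -> is_inv_letter T (x i) (xinv i)) ->
         (map x (iota 1 n.+1), map xinv (rev (iota n.+2 n))) \in T).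
Proof.
move=> LR [_ Cf] IC PG; have geo := cayley_geodetic LR Cf IC PG.
split=> // u m m_gt2 circ; have odd_m := isometric_circuit_odd geo m_gt2 circ.
have mE : m = (m./2).*2.+1 by rewrite -[LHS]odd_double_half odd_m.
have n_gt0 : 0 < m./2 by lia.
exists m./2; do 2!split=> //; move=> x xinv label_x inv_x.
exact (isometric_circuit_rule label_x inv_x LR Cf PG mE n_gt0 circ).
Qed.
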